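(* Let $k$ and $s$ be integers with $1\leq s\leq k$, and let $G$ be a connected cograph on at least $k+s+2$ vertices that has no $k$-dense $(k+s+2)$-set. Then there exists a set $L$ of vertices of $G$ with $1\leq |L|\leq s$ such that every vertex of $L$ is adjacent to every vertex of $V(G)\setminus L$.
   Context: All graphs are finite and simple. For a graph $G$ and a nonnegative integer $k$, a $k$-sparse set is a set of vertices inducing a subgraph of maximum degree at most $k$; a $k$-dense $i$-set is a set of $i$ vertices of $G$ that is $k$-sparse in the complement of $G$. A cograph is a graph containing no induced path on four vertices (equivalently, the complement of every connected induced subgraph on at least two vertices is disconnected). *)

From mathcomp Require Import all_boot.
Set Implicit Arguments. Unset Strict Implicit. Unset Printing Implicit Defensive.

Definition simple_graph (T : finType) (e : rel T) : Prop :=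
  symmetric e /\ irreflexive e.

Definition compl_rel (T : finType) (e : rel T) : rel T :=
  fun x y => (x != y) && ~~ e x y.

Definition sparse_set (T : finType) (e : rel T) (k : nat) (S : {set T}) : Prop :=
  forall x, x \in S -> #|[set y in S | e x y]| <= k.

Definition dense_iset (T : finType) (e : rel T) (k i : nat) (S : {set T}) : Prop :=
  #|S| = i /\ sparse_set (compl_rel e) k S.

Definition connected_graph (T : finType) (e : rel T) : Prop :=
  forall x y : T, connect e x y.

Definition cograph (T : finType) (e : rel T) : Prop :=
  ~ exists a b c d : T,
      [/\ uniq [:: a; b; c; d],
          [&& e a b, e b c & e c d] &
          [&& ~~ e a c, ~~ e b d & ~~ e a d]].

From mathcomp Require Import all_boot zify.
Set Implicit Arguments. Unset Strict Implicit. Unset Printing Implicit Defensive.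

(* By Seinsche's theorem, a connected cograph on at least two vertices has a
   disconnected complement, so its vertices split into nonempty parts A and
   V \ A with every vertex of A adjacent to every vertex of V \ A.  If one part
   has at most s vertices, it is the required L.  Otherwise pick at most k + 1
   vertices in each part, k + s + 2 in total (possible since s <= k): in the
   complement no chosen vertex has a neighbour in the other part, so each has
   at most k neighbours among the chosen ones, which thus form a k-dense
   (k + s + 2)-set.
   Seinsche's theorem goes by induction: a split of S \ v extends to S, after
   complementing the graph if necessary, since the only obstruction would be
   an induced path on four vertices through v. *)

Lemma exists_subset_card (T : finType) (A : {set T}) n :
  n <= #|A| -> exists2 B : {set T}, B \subset A & #|B| = n.
Proof.
case/card_geqP=> s [s_uniq <- s_sub]; exists [set x in s].
  by apply/subsetP=> x; rewrite inE; apply: s_sub.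
by rewrite cardsE (card_uniqP s_uniq).
Qed.

Section Relations.
Variable T : finType.
Implicit Types (r : rel T) (A B S : {set T}).

Definition anticomplete r A B :=
  forall a b, a \in A -> b \in B -> ~~ r a b.

Definition complete r A B :=
  forall a b, a \in A -> b \in B -> r a b.

(* The subgraph induced by S, or its complement, is disconnected. *)
Definition decomposable r S :=
  exists A : {set T}, [/\ A != set0, A \proper S &
    anticomplete r A (S :\: A) \/ complete r A (S :\: A)].

Lemma anticomplete_sym r A B : symmetric r -> anticomplete r A B -> anticomplete r B A.
Proof. by move=> r_sym AB b a bB aA; rewrite r_sym AB. Qed.

Lemma compl_rel_sym r : symmetric r -> symmetric (compl_rel r).
Proof. by move=> r_sym x y; rewrite /compl_rel eq_sym r_sym. Qed.

Lemma compl_rel_irr r : irreflexive (compl_rel r).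
Proof. by move=> x; rewrite /compl_rel eqxx. Qed.

Lemma anticomplete_compl r A B : complete r A B -> anticomplete (compl_rel r) A B.
Proof. by move=> AB a b aA bB; rewrite /compl_rel AB // andbF. Qed.

Lemma decomposable_compl r S : decomposable (compl_rel r) S -> decomposable r S.
Proof.
move=> [A [A0 AS AB]]; exists A; split=> //.
case: AB => AB; [right | left] => a b aA bSA; have := AB a b aA bSA; rewrite /compl_rel.
  have -> : a != b by apply: contraTneq aA => ->; move: bSA; rewrite inE => /andP[].
  by rewrite negbK.
by case/andP.
Qed.

Lemma decomposable_pair r x y : x != y -> decomposable r [set x; y].
Proof.
move=> xy; exists [set x]; split.
- by apply/set0Pn; exists x; rewrite inE.
- by rewrite properEcard subsetUl cards1 cards2 xy.
have yE b : b \in [set x; y] :\: [set x] -> b = y.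
  by rewrite !inE => /andP[/negPf-> /eqP].
by case: (boolP (r x y)) => rxy; [right | left] => a b /set1P-> /yE->.
Qed.

Lemma sparse_set_small r k S :
  irreflexive r -> #|S| <= k.+1 -> sparse_set r k S.
Proof.
move=> r_irr S_small x xS; rewrite -ltnS (leq_trans _ S_small) //.
rewrite (cardsD1 x S) xS add1n ltnS subset_leq_card //.
apply/subsetP=> y; rewrite !inE => /andP[-> rxy]; rewrite andbT.
by apply: contraTneq rxy => ->; rewrite r_irr.
Qed.

Lemma sparse_setU r k A B :
  symmetric r -> anticomplete r A B ->
  sparse_set r k A -> sparse_set r k B -> sparse_set r k (A :|: B).
Proof.
move=> r_sym AB spA spB x; rewrite inE => /orP[xA | xB].
- apply: leq_trans (spA x xA); apply/subset_leq_card/subsetP=> y.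
  rewrite !inE => /andP[/orP[-> | yB] rxy] //.
  by move: (AB x y xA yB); rewrite rxy.
- apply: leq_trans (spB x xB); apply/subset_leq_card/subsetP=> y.
  rewrite !inE => /andP[/orP[yA | ->] rxy] //.
  by move: (AB y x yA xB); rewrite r_sym rxy.
Qed.

Lemma connected_not_anticomplete r A :
  symmetric r -> connected_graph r -> A != set0 -> A \proper [set: T] ->
  ~ anticomplete r A (~: A).
Proof.
move=> r_sym r_conn /set0Pn[x xA] /properP[_ [y _ yA]] AAc.
have A_closed : closed r A.
  move=> a b ab; case: (boolP (a \in A)) => aA; case: (boolP (b \in A)) => bA //.
    by have := AAc a b aA; rewrite inE bA ab => /(_ isT).
  by have := AAc b a bA; rewrite inE aA r_sym ab => /(_ isT).
by move: (closed_connect A_closed (r_conn x y)); rewrite xA (negbTE yA).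
Qed.

Lemma cograph_P4 r :
  symmetric r -> irreflexive r -> cograph r ->
  forall a b c d, r a b -> r b c -> r c d -> [|| r a c, r b d | r a d].
Proof.
move=> r_sym r_irr r_cog a b c d ab bc cd.
apply/negPn/negP => /norP[ac /norP[bd ad]].
apply: r_cog; exists a, b, c, d; split; last by rewrite ac bd ad.
  have neq u w : r u w -> u != w by apply: contraTneq => ->; rewrite r_irr.
  rewrite /= !inE !negb_or (neq _ _ ab) (neq _ _ bc) (neq _ _ cd) /= !andbT -andbA.
  apply/and3P; split; first by apply: contraNneq ad => ->.
    by apply: contraNneq ac => ->; rewrite r_sym.
  by apply: contraNneq ad => <-.
by rewrite ab bc cd.
Qed.

Lemma cograph_compl r :
  symmetric r -> irreflexive r -> cograph r -> cograph (compl_rel r).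
Proof.
move=> r_sym r_irr r_cog [a [b [c [d [abcd /and3P[ab bc cd] /and3P[ac bd ad]]]]]].
move: abcd; rewrite /= !inE !negb_or => /and4P[/and3P[_ a_c a_d] /andP[_ b_d] _ _].
move: ab bc cd ac bd ad; rewrite /compl_rel a_c a_d b_d /= !negbK.
move=> /andP[_ nab] /andP[_ nbc] /andP[_ ncd] rac rbd rad.
have := cograph_P4 r_sym r_irr r_cog rbd (etrans (r_sym d a) rad) rac.
by rewrite (r_sym b a) (r_sym d c) (negbTE nab) (negbTE ncd) (negbTE nbc).
Qed.

(* If [v] misses [w] in [A] but sees some [b0] in [B], the non-neighbours of
   [v] in [A] form the required part: an edge [x y] from such an [x] to a
   neighbour [y] of [v] in [A] would close the induced path [x y v b0]. *)
Lemma decomposable_nonneighbor r v w A B :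
  symmetric r -> irreflexive r -> cograph r ->
  v \notin A -> v \notin B -> anticomplete r A B ->
  w \in A -> ~~ r v w -> B != set0 -> decomposable r (v |: (A :|: B)).
Proof.
move=> r_sym r_irr r_cog vA vB AB wA vw B0.
case: (boolP [exists b in B, r v b]) => [/exists_inP[b0 b0B vb0] | /exists_inPn vB'].
  exists [set x in A | ~~ r v x]; split.
  - by apply/set0Pn; exists w; rewrite inE wA.
  - apply/properP; split; last by exists v; rewrite !inE ?eqxx // (negbTE vA).
    by apply/subsetP=> x; rewrite !inE => /andP[-> _]; rewrite orbT.
  left=> x y; rewrite !inE => /andP[xA vx] /andP[yA' /or3P[/eqP-> | yA | yB]].
  - by rewrite r_sym.
  - apply/negP=> xy; have vy : r v y by move: yA'; rewrite yA negbK.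
    have := cograph_P4 r_sym r_irr r_cog xy (etrans (r_sym y v) vy) vb0.
    by rewrite r_sym (negbTE vx) (negbTE (AB _ _ yA b0B)) (negbTE (AB _ _ xA b0B)).
  - exact: AB.
exists B; split=> //.
  apply/properP; split; last by exists v; rewrite ?inE ?eqxx.
  by apply/subsetP=> x xB; rewrite !inE xB !orbT.
left=> b x bB; rewrite !inE => /andP[xB' /or3P[/eqP-> | xA | xB]].
- by rewrite r_sym vB'.
- by rewrite r_sym AB.
- by rewrite xB in xB'.
Qed.

Lemma decomposable_add_vertex r S v A :
  symmetric r -> irreflexive r -> cograph r ->
  v \in S -> A != set0 -> A \proper S :\ v -> anticomplete r A ((S :\ v) :\: A) ->
  decomposable r S.
Proof.
move=> r_sym r_irr r_cog vS A0 AS; set B := (S :\ v) :\: A => AB.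
have sAS := proper_sub AS; have /subsetD1P[_ vA] := sAS.
have SE : S = v |: (A :|: B) by rewrite /B -{1}(setIidPr sAS) setID setD1K.
have vB : v \notin B by rewrite /B !inE eqxx /= andbF.
have B0 : B != set0 by case/properP: AS => _ [b bS bA]; apply/set0Pn; exists b; rewrite /B inE bA.
case: (boolP [forall x in A :|: B, r v x]) => [/forall_inP vAB | /forall_inPn[w wAB vw]].
  exists [set v]; split; first by apply/set0Pn; exists v; rewrite inE.
    rewrite properEcard sub1set vS cards1 SE cardsU1 inE negb_or vA vB /=.
    by rewrite ltnS (leq_trans _ (subset_leq_card (subsetUl A B))) // card_gt0.
  by right=> x y /set1P-> /setD1P[yv]; rewrite SE in_setU1 (negbTE yv) => /vAB.
rewrite SE; case/setUP: wAB => [wA | wB].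
  exact: decomposable_nonneighbor r_sym r_irr r_cog vA vB AB wA vw B0.
rewrite (setUC A B).
exact: decomposable_nonneighbor r_sym r_irr r_cog vB vA (anticomplete_sym r_sym AB) wB vw A0.
Qed.

Theorem cograph_decomposable r S :
  symmetric r -> irreflexive r -> cograph r -> 1 < #|S| -> decomposable r S.
Proof.
have [n] := ubnP #|S|; elim: n r S => // n IH r S; rewrite ltnS => Sn r_sym r_irr r_cog S_gt1.
case: (ltngtP #|S| 2) => [| S_gt2 | /eqP/cards2P[x [y [xy ->]]]]; first by rewrite ltnNge S_gt1.
  have [v vS] : exists v, v \in S by apply/set0Pn; rewrite -card_gt0 ltnW.
  have Sv_gt1 : 1 < #|S :\ v| by move: S_gt2; rewrite (cardsD1 v S) vS.
  have Svn : #|S :\ v| < n by move: Sn; rewrite (cardsD1 v S) vS.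
  have [A [A0 AS [AB | AB]]] := IH r (S :\ v) Svn r_sym r_irr r_cog Sv_gt1.
    exact: decomposable_add_vertex r_sym r_irr r_cog vS A0 AS AB.
  apply: decomposable_compl.
  apply: decomposable_add_vertex (compl_rel_sym r_sym) (compl_rel_irr r)
    (cograph_compl r_sym r_irr r_cog) vS A0 AS _.
  exact: anticomplete_compl.
exact: decomposable_pair.
Qed.

Lemma dense_iset_of_join e k s A :
  symmetric e -> s <= k -> complete e A (~: A) ->
  s < #|A| -> s < #|~: A| -> k + s + 2 <= #|T| ->
  exists S : {set T}, dense_iset e k (k + s + 2) S.
Proof.
move=> e_sym s_le_k AAc A_gt Ac_gt T_ge.
have [S1 S1A S1_card] := exists_subset_card (geq_minl #|A| k.+1).
have S2_le : k + s + 2 - minn #|A| k.+1 <= #|~: A|.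
  by move: T_ge; rewrite -(cardsC A); lia.
have [S2 S2Ac S2_card] := exists_subset_card S2_le.
have S12 : anticomplete (compl_rel e) S1 S2.
  by move=> a b /(subsetP S1A) aA /(subsetP S2Ac) bAc; apply: anticomplete_compl AAc a b aA bAc.
exists (S1 :|: S2); split.
  rewrite cardsU S1_card S2_card.
  have /eqP-> : S1 :&: S2 == set0.
    rewrite setI_eq0 disjoints_subset; apply: subset_trans S1A _.
    by rewrite -disjoints_subset disjoint_sym disjoints_subset.
  by rewrite cards0; lia.
apply: (sparse_setU (compl_rel_sym e_sym) S12); apply: (sparse_set_small (compl_rel_irr e));
  rewrite ?S1_card ?S2_card; lia.
Qed.

End Relations.

Theorem lemma7p1 (T : finType) (e : rel T) (k s : nat) :
  simple_graph e ->
  1 <= s <= k ->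
  connected_graph e ->
  cograph e ->
  k + s + 2 <= #|T| ->
  ~ (exists S : {set T}, dense_iset e k (k + s + 2) S) ->
  exists L : {set T},
    1 <= #|L| <= s /\
    (forall x y, x \in L -> y \in ~: L -> e x y).
Proof.
move=> [e_sym e_irr] /andP[_ s_le_k] e_conn e_cog T_ge no_dense.
have [|A [A0 AT]] := cograph_decomposable (S := [set: T]) e_sym e_irr e_cog.
  by rewrite cardsT; lia.
rewrite setTD => -[AAc | AAc]; first by case: (connected_not_anticomplete e_sym e_conn A0 AT).
have AcA : complete e (~: A) (~: ~: A) by rewrite setCK => x y xAc yA; rewrite e_sym AAc.
have Ac0 : ~: A != set0 by case/properP: AT => _ [y _ yA]; apply/set0Pn; exists y; rewrite inE.
case: (leqP #|A| s) => [A_le | A_gt].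
  by exists A; split; [rewrite A_le andbT card_gt0 | exact: AAc].
case: (leqP #|~: A| s) => [Ac_le | Ac_gt].
  by exists (~: A); split; [rewrite Ac_le andbT card_gt0 | exact: AcA].
by case: no_dense; apply: dense_iset_of_join e_sym s_le_k AAc A_gt Ac_gt T_ge.
Qed.
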